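(* Let $f:\mathbb{R}^n\to\mathbb{R}$ be continuously differentiable and bounded below with $\nabla f$ Lipschitz continuous on $\mathbb{R}^n$, let $s$ be an integer with $0<s<n$, and let $\{\mathbf{x}^k\}$ be the sequence generated by the greedy sparse-simplex method. Then any accumulation point $\mathbf{x}^*$ of $\{\mathbf{x}^k\}$ is an $L_2(f)$-stationary point of the problem (P): minimize $f(\mathbf{x})$ subject to $\|\mathbf{x}\|_0\le s$; i.e. $\nabla_i f(\mathbf{x}^* )=0$ for $i\in I_1(\mathbf{x}^* )$ and $|\nabla_i f(\mathbf{x}^* )|\le L_2(f)M_s(\mathbf{x}^* )$ for $i\in I_0(\mathbf{x}^* )$.
   Context: $\|\mathbf{x}\|_0$ is the number of nonzero components, $C_s=\{\mathbf{x}:\|\mathbf{x}\|_0\le s\}$, $I_1(\mathbf{x})=\{i:x_i\neq0\}$, $I_0(\mathbf{x})=\{i:x_i=0\}$, $M_s(\mathbf{x})$ the $s$-th largest absolute value among components of $\mathbf{x}$, $\mathbf{e}_i$ the $i$-th standard basis vector. For $i\neq j$, $\nabla_{i,j}f(\mathbf{x})\in\mathbb{R}^2$ is the vector of the $i$-th and $j$-th partial derivatives, $L_{i,j}(f)$ is a constant with $\|\nabla_{i,j}f(\mathbf{x})-\nabla_{i,j}f(\mathbf{x}+\mathbf{d})\|\le L_{i,j}(f)\|\mathbf{d}\|$ for all $\mathbf{x}$ and all $\mathbf{d}$ with at most two nonzero components, and $L_2(f)=\max_{i\neq j}L_{i,j}(f)$. Greedy sparse-simplex method (all one-dimensional minima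 assumed attained): choose $\mathbf{x}^0\in C_s$. At step $k$: if $\|\mathbf{x}^k\|_0<s$, for each $i$ let $t_i\in\operatorname{argmin}_t f(\mathbf{x}^k+t\mathbf{e}_i)$, $f_i=\min_t f(\mathbf{x}^k+t\mathbf{e}_i)$, $i_k\in\operatorname{argmin}_i f_i$; if $f_{i_k}<f(\mathbf{x}^k)$ set $\mathbf{x}^{k+1}=\mathbf{x}^k+t_{i_k}\mathbf{e}_{i_k}$, else stop. If $\|\mathbf{x}^k\|_0=s$, for $i\in I_1(\mathbf{x}^k)$, $j=1,\dots,n$ let $t_{i,j}\in\operatorname{argmin}_t f(\mathbf{x}^k-x_i^k\mathbf{e}_i+t\mathbf{e}_j)$, $f_{i,j}$ the minimum value, $(i_k,j_k)\in\operatorname{argmin}f_{i,j}$; if $f_{i_k,j_k}<f(\mathbf{x}^k)$ set $\mathbf{x}^{k+1}=\mathbf{x}^k-x^k_{i_k}\mathbf{e}_{i_k}+t_{i_k,j_k}\mathbf{e}_{j_k}$, else stop. *)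

From HB Require Import structures.
From mathcomp Require Import all_boot all_order all_algebra.
From mathcomp Require Import all_classical all_reals all_analysis.
Set Implicit Arguments. Unset Strict Implicit. Unset Printing Implicit Defensive.
Import Order.TTheory GRing.Theory Num.Theory.
Import numFieldNormedType.Exports.
Local Open Scope ring_scope.

Section Defs.
Variables (R : realType) (n : nat).
Implicit Types (x y d : 'rV[R]_n) (f : 'rV[R]_n -> R).

Definition evec (i : 'I_n) : 'rV[R]_n := delta_mx 0 i.

Definition l0 x : nat := #|[pred i : 'I_n | x 0 i != 0]|.

Definition enorm x : R := Num.sqrt (\sum_(i < n) x 0 i ^+ 2).

Definition Ms (s : nat) x : R :=
  nth 0 (sort (fun a b : R => b <= a) [seq `|x 0 i| | i <- enum 'I_n]) s.-1.

Definition partial f (i : 'I_n) x : R := 'D_(evec i) f x.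

Definition grad f x : 'rV[R]_n := \row_(i < n) partial f i x.

Definition norm_grad_ij_diff f (i j : 'I_n) x y : R :=
  Num.sqrt ((partial f i x - partial f i y) ^+ 2 + (partial f j x - partial f j y) ^+ 2).

(* L2 bounds every block-Lipschitz constant L_{i,j}(f), i.e. L2 >= max_{i<>j} L_{i,j}(f) *)
Definition L2_bound f (L2 : R) : Prop :=
  forall i j : 'I_n, i != j -> forall x d, (l0 d <= 2)%N ->
    norm_grad_ij_diff f i j x (x + d) <= L2 * enorm d.

(* one iteration of the greedy sparse-simplex method (or termination, after
   which the iterate stays put) *)
Definition greedy_step f (s : nat) x x' : Prop :=
  if (l0 x < s)%N then
    (exists (i : 'I_n) (t : R),
        (forall t' : R, f (x + t *: evec i) <= f (x + t' *: evec i)) /\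
        (forall (j : 'I_n) (t' : R), f (x + t *: evec i) <= f (x + t' *: evec j)) /\
        f (x + t *: evec i) < f x /\
        x' = x + t *: evec i)
    \/ ((forall (i : 'I_n) (t : R), f x <= f (x + t *: evec i)) /\ x' = x)
  else
    (exists (i j : 'I_n) (t : R), x 0 i != 0 /\
        (forall t' : R, f (x - x 0 i *: evec i + t *: evec j)
                        <= f (x - x 0 i *: evec i + t' *: evec j)) /\
        (forall (i' j' : 'I_n) (t' : R), x 0 i' != 0 ->
            f (x - x 0 i *: evec i + t *: evec j)
            <= f (x - x 0 i' *: evec i' + t' *: evec j')) /\
        f (x - x 0 i *: evec i + t *: evec j) < f x /\
        x' = x - x 0 i *: evec i + t *: evec j)
    \/ ((forall (i j : 'I_n) (t : R), x 0 i != 0 ->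
            f x <= f (x - x 0 i *: evec i + t *: evec j)) /\ x' = x).

Definition greedy_seq f (s : nat) (xs : nat -> 'rV[R]_n) : Prop :=
  (l0 (xs 0%N) <= s)%N /\ forall k, greedy_step f s (xs k) (xs k.+1).

Definition accumulation_point (xs : nat -> 'rV[R]_n) xstar : Prop :=
  forall e : R, 0 < e -> forall N : nat, exists k : nat,
    (N <= k)%N /\ enorm (xs k - xstar) < e.

Definition L_stationary f (s : nat) (L : R) x : Prop :=
  forall i : 'I_n,
    (x 0 i != 0 -> partial f i x = 0) /\
    (x 0 i = 0 -> `|partial f i x| <= L * Ms s x).

End Defs.

From mathcomp Require Import all_boot all_order all_algebra.
From mathcomp Require Import all_classical all_reals all_analysis.
From mathcomp Require Import ring lra.
Import Order.TTheory GRing.Theory Num.Theory.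
Import numFieldNormedType.Exports.
Local Open Scope ring_scope.

(* Block-Lipschitz continuity of the gradient along every pair of coordinates
   gives the descent inequality
     f (x + a e_i + b e_j) <= f x + a d_i f x + b d_j f x + L2/2 (a^2 + b^2).
   The values f (x^k) decrease, so f x^* is below every f (x^k) and, by
   continuity, below every value the greedy step could reach from x^*: when
   ||x^*||_0 < s this is every f (x^* + t e_j), and when ||x^*||_0 = s every swap
   f (x^* - x^*_i e_i + t e_j) with x^*_i <> 0 (nearby iterates have the same
   support as x^*, hence ||x^k||_0 = s).  Feeding these minimality properties
   into the descent inequality yields d_i f x^* = 0 on the support, and, choosing
   i with |x^*_i| = M_s x^*, the bound |d_j f x^*| <= L2 M_s x^* off the support. *)

Lemma norm_dot2_le {R : rcfType} (a b A B : R) :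
  `|a * A + b * B| <= Num.sqrt (a ^+ 2 + b ^+ 2) * Num.sqrt (A ^+ 2 + B ^+ 2).
Proof.
rewrite -sqrtrM ?addr_ge0 ?sqr_ge0 // -sqrtr_sqr ler_sqrt ?mulr_ge0 ?addr_ge0 ?sqr_ge0 //.
rewrite -subr_ge0.
have -> : (a ^+ 2 + b ^+ 2) * (A ^+ 2 + B ^+ 2) - (a * A + b * B) ^+ 2 =
  (a * B - b * A) ^+ 2 by ring.
exact: sqr_ge0.
Qed.

(* Evaluate the hypothesis at its minimiser t = - g / L (for L <> 0). *)
Lemma norm_le_of_quadratic_ge0 {R : realFieldType} (g L a : R) : 0 <= L ->
  (forall t, 0 <= t * g + L / 2 * (a ^+ 2 + t ^+ 2)) -> `|g| <= L * `|a|.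
Proof.
move=> L0 H.
suff g2 : g ^+ 2 <= L ^+ 2 * a ^+ 2.
  have : `|g| ^+ 2 <= (L * `|a|) ^+ 2 by rewrite exprMn !real_normK ?num_real.
  by rewrite ler_sqr // ?nnegrE ?mulr_ge0.
have [L00|Ln0] := eqVneq L 0.
  have := H (- g); rewrite L00 !mul0r addr0 mulNr oppr_ge0 -expr2 => g2.
  by rewrite expr0n /= mul0r.
have Lp : 0 < L by rewrite lt_def Ln0.
have := H (- g / L).
have -> : - g / L * g + L / 2 * (a ^+ 2 + (- g / L) ^+ 2) =
   (L ^+ 2 * a ^+ 2 - g ^+ 2) / (2 * L) by field; rewrite Ln0.
by rewrite pmulr_lge0 ?subr_ge0 // invr_gt0 mulr_gt0.
Qed.

Lemma count_gt0_sorted_le {R : realDomainType} (l : seq R) k :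
  sorted (fun a b : R => b <= a) l -> nth 0 l k <= 0 ->
  (count (fun a : R => (0 < a)%R) l <= k)%N.
Proof.
elim: l k => [|a l IH] k //= sorted_al.
have sorted_l : sorted (fun a b : R => b <= a) l by exact: path_sorted sorted_al.
case: k => [|k] /= hk; last first.
  by apply: leq_trans (leq_add (leq_b1 _) (IH k sorted_l hk)) _; rewrite add1n.
have le_a := order_path_min (fun y x z (h1 : y <= x) (h2 : z <= y) => le_trans h2 h1) sorted_al.
rewrite (le_gtF hk) add0n leqn0 eqn0Ngt -has_count; apply/hasPn => b bl.
by rewrite -leNgt; apply: le_trans (allP le_a b bl) hk.
Qed.

Lemma poly2_is_derive {R : realType} (c q u : R) :
  is_derive u 1 (fun v : R => v * c + v ^+ 2 * q) (c + 2 * u * q).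
Proof.
change (is_derive u 1 ((@id R) * cst c + (@id R) ^+ 2 * cst q) (c + 2 * u * q)).
apply: is_derive_eq.
rewrite !scaler0 !add0r /cst /= expr1.
rewrite -[c%:A]/(c * 1) -[(2 * u)%:A]/((2 * u) * 1).
rewrite -[_ *: (_ * 1)]/(q * ((2 * u) * 1)).
by rewrite !mulr1 mulrC.
Qed.

Section Vectors.
Context {R : realType} {n : nat}.
Implicit Types (x y : 'rV[R]_n) (i j k : 'I_n).

Lemma exists_ord_neq : (1 < n)%N -> forall i : 'I_n, exists j, i != j.
Proof.
move=> n1 i; pose i0 : 'I_n := Ordinal (ltnW n1); pose i1 : 'I_n := Ordinal n1.
by have [->|] := eqVneq i i0; [exists i1 | exists i0].
Qed.

Lemma evec2E i j k (a b : R) :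
  (a *: evec R i + b *: evec R j) 0 k = a * (k == i)%:R + b * (k == j)%:R.
Proof. by rewrite /evec !mxE eqxx. Qed.

Lemma coord_le_enorm x i : `|x 0 i| <= enorm x.
Proof.
rewrite /enorm -(sqrtr_sqr (x 0 i)) ler_sqrt; last first.
  by rewrite sumr_ge0 // => k _; rewrite sqr_ge0.
by rewrite (bigD1 i) //= lerDl sumr_ge0 // => k _; rewrite sqr_ge0.
Qed.

Lemma normr_le_enorm x : `|x| <= enorm x.
Proof.
rewrite [leLHS]/Num.Def.normr /= mx_normrE.
apply: bigmax_le; first by rewrite /enorm sqrtr_ge0.
by case=> a b _ /=; rewrite (ord1 a); exact: coord_le_enorm.
Qed.

Lemma enorm_evec2 i j (a b : R) : i != j ->
  enorm (a *: evec R i + b *: evec R j) = Num.sqrt (a ^+ 2 + b ^+ 2).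
Proof.
move=> ij; rewrite /enorm; congr Num.sqrt.
rewrite (bigD1 i) //= (bigD1 j) 1?eq_sym //= big1; last first.
  move=> k /andP[ki kj]; rewrite evec2E (negbTE ki) (negbTE kj).
  by rewrite !mulr0 addr0 expr0n.
rewrite !evec2E !eqxx (negbTE ij) (eq_sym j i) (negbTE ij) /=; ring.
Qed.

Lemma l0_evec2 i j (a b : R) : (l0 (a *: evec R i + b *: evec R j) <= 2)%N.
Proof.
have supp : [pred k | (a *: evec R i + b *: evec R j) 0 k != 0] \subset [set i; j].
  apply/fintype.subsetP => k; rewrite !inE evec2E.
  by case: (k == i); case: (k == j); rewrite ?mulr0 ?addr0 ?eqxx //= orbT.
by apply: leq_trans (subset_leq_card supp) _; rewrite cards2; case: (i != j).
Qed.

Lemma l0_le_support {x y} :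
  (forall i, x 0 i != 0 -> y 0 i != 0) -> (l0 x <= l0 y)%N.
Proof.
by move=> xy; apply: subset_leq_card; apply/fintype.subsetP => i; rewrite !inE; exact: xy.
Qed.

Lemma l0_ltP {x y} : (l0 x < l0 y)%N -> exists i, y 0 i != 0 /\ x 0 i = 0.
Proof.
move=> lt_xy; apply: contrapT => nex.
suff : (l0 y <= l0 x)%N by rewrite leqNgt lt_xy.
apply: l0_le_support => i yi; apply/negP => /eqP xi.
by apply: nex; exists i.
Qed.

Lemma Ms_ge0 s x : 0 <= Ms s x.
Proof.
rewrite /Ms; set srt := sort _ _.
have [lt_s|] := ltnP s.-1 (size srt); last by move=> le_s; rewrite nth_default.
have : nth 0 srt s.-1 \in srt by exact: mem_nth.
by rewrite mem_sort => /mapP [i _ ->].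
Qed.

Lemma Ms_attained {s x} :
  (0 < s)%N -> (s <= l0 x)%N -> exists i, x 0 i != 0 /\ `|x 0 i| = Ms s x.
Proof.
move=> s0 sx; rewrite /Ms; set L := [seq _ | _ <- _]; set srt := sort _ L.
have size_srt : size srt = n by rewrite size_sort size_map size_enum_ord.
have l0n : (l0 x <= n)%N by rewrite /l0 -[X in (_ <= X)%N]card_ord max_card.
have lt_s : (s.-1 < size srt)%N.
  by rewrite size_srt; apply: leq_trans l0n; rewrite prednK.
have : nth 0 srt s.-1 \in srt by exact: mem_nth.
rewrite mem_sort => /mapP [i _ srt_i]; exists i; split; last by rewrite srt_i.
apply/negP => /eqP xi0.
have : (count (fun a : R => (0 < a)%R) srt <= s.-1)%N.
  apply: count_gt0_sorted_le; first by apply: sort_sorted => a b; exact: le_total.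
  by rewrite srt_i xi0 normr0.
have -> : count (fun a : R => (0 < a)%R) srt = l0 x.
  rewrite (permP (permEl (perm_sort _ L))) count_map /l0 cardE size_filter -enumT.
  by apply: eq_count => k /=; rewrite normr_gt0 unfold_in.
by move=> H; move: (leq_trans sx H); rewrite -ltnS prednK // ltnn.
Qed.

Lemma swap_continuous i j (t : R) (z : 'rV[R]_n) :
  {for z, continuous (fun y : 'rV[R]_n => y - y 0 i *: evec R i + t *: evec R j)}.
Proof.
apply: (@continuousD _ _ _ (fun y : 'rV[R]_n => y - y 0 i *: evec R i)
  (fun _ => t *: evec R j)); last exact: cst_continuous.
apply: (@continuousB _ _ _ id (fun y : 'rV[R]_n => y 0 i *: evec R i)); first exact: cvg_id.
by apply: (@continuousZr_tmp _ _ _ (fun y : 'rV[R]_n => y 0 i)); exact: coord_continuous.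
Qed.

Lemma near_coord_neq0 {z : 'rV[R]_n} {i} : z 0 i != 0 ->
  \forall y \near z, (y : 'rV[R]_n) 0 i != 0.
Proof.
move=> zi.
have := (cvgrPdist_lt _ _).1 (@coord_continuous R 1 n 0 i z) `|z 0 i|.
rewrite normr_gt0 => /(_ _ zi).
by apply: filterS => y lt_y; apply/eqP => y0; move: lt_y; rewrite y0 subr0 ltxx.
Qed.

Lemma near_support (z : 'rV[R]_n) :
  \forall y \near z, forall i, z 0 i != 0 -> (y : 'rV[R]_n) 0 i != 0.
Proof.
apply: (@filter_forall _ _ (fun i (y : 'rV[R]_n) => z 0 i != 0 -> y 0 i != 0) (nbhs z)) => i.
have [zi|zi] := eqVneq (z 0 i) 0; first by apply: nearW.
by move: (near_coord_neq0 zi); apply: filterS => y yi _.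
Qed.

Lemma accumulation_near {xs : nat -> 'rV[R]_n} {xstar : 'rV[R]_n} {P : 'rV[R]_n -> Prop} :
  accumulation_point xs xstar -> (\forall y \near xstar, P y) ->
  forall N, exists m, (N <= m)%N /\ P (xs m).
Proof.
move=> acc /nbhs_normP [e e0 ball_P] N.
have [m [Nm xs_m]] := acc e e0 N.
exists m; split => //; apply: ball_P => /=.
by rewrite distrC; apply: le_lt_trans xs_m; exact: normr_le_enorm.
Qed.

End Vectors.

Section Descent.
Context {R : realType} {n : nat} {f : 'rV[R]_n -> R} {L2 : R}.
Hypotheses (df : forall x, differentiable f x) (f_L2 : L2_bound f L2).
Implicit Types (x : 'rV[R]_n) (i j : 'I_n) (a b t : R).

Lemma L2_bound_ge0 : (1 < n)%N -> 0 <= L2.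
Proof.
move=> n1; have [j ij] := exists_ord_neq n1 (Ordinal (ltnW n1)).
have := f_L2 _ _ ij 0 _ (l0_evec2 (Ordinal (ltnW n1)) j 1 0).
rewrite enorm_evec2 // expr1n expr0n /= addr0 sqrtr1 mulr1.
by apply: le_trans; exact: sqrtr_ge0.
Qed.

Lemma derive_evec2 y i j a b :
  'D_(a *: evec R i + b *: evec R j) f y = a * partial f i y + b * partial f j y.
Proof. by rewrite deriveE // linearD !linearZ /= /partial !deriveE. Qed.

Lemma is_derive_along x (d : 'rV[R]_n) (u : R) :
  is_derive u 1 (fun u : R => f (x + u *: d)) ('D_d f (x + u *: d)).
Proof.
have E : (fun h : R => h^-1 *: (((fun u : R => f (x + u *: d)) \o shift u) (h *: 1)
                               - f (x + u *: d))) =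
         (fun h : R => h^-1 *: ((f \o shift (x + u *: d)) (h *: d) - f (x + u *: d))).
  apply/funext => h /=; congr (_ *: (f _ - _)).
  by rewrite /shift /= -[h%:A]/(h * 1) mulr1 scalerDl addrCA.
split; first by rewrite /derivable E; exact: diff_derivable.
by rewrite /derive E.
Qed.

Lemma derive_evec2_increment x i j a b c : i != j -> 0 <= c ->
  'D_(a *: evec R i + b *: evec R j) f (x + c *: (a *: evec R i + b *: evec R j))
  - 'D_(a *: evec R i + b *: evec R j) f x <= c * (L2 * (a ^+ 2 + b ^+ 2)).
Proof.
move=> ij c0; set d := a *: evec R i + b *: evec R j; rewrite !derive_evec2.
set Di := partial f i x - partial f i (x + c *: d).
set Dj := partial f j x - partial f j (x + c *: d).
have -> : a * partial f i (x + c *: d) + b * partial f j (x + c *: d) -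
    (a * partial f i x + b * partial f j x) = - (a * Di + b * Dj) by rewrite /Di /Dj; ring.
apply: le_trans (ler_norm _) _; rewrite normrN.
apply: le_trans (norm_dot2_le _ _ _ _) _.
have cd : c *: d = (c * a) *: evec R i + (c * b) *: evec R j by rewrite scalerDr !scalerA.
set S := Num.sqrt (a ^+ 2 + b ^+ 2).
have norm_D : Num.sqrt (Di ^+ 2 + Dj ^+ 2) <= L2 * (c * S).
  have := f_L2 _ _ ij x _ (l0_evec2 i j (c * a) (c * b)).
  by rewrite enorm_evec2 // -cd !exprMn -mulrDr sqrtrM ?sqr_ge0 // sqrtr_sqr ger0_norm.
apply: le_trans (ler_wpM2l (sqrtr_ge0 _) norm_D) _.
have -> : S * (L2 * (c * S)) = c * (L2 * S ^+ 2) by ring.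
by rewrite sqr_sqrtr ?addr_ge0 ?sqr_ge0.
Qed.

(* Mean value theorem for u |-> f (x + u d) - (u c + u^2 q) on [0, 1]; its
   derivative is nonpositive by derive_evec2_increment. *)
Lemma descent_evec2 x i j a b : i != j ->
  f (x + (a *: evec R i + b *: evec R j)) <=
  f x + (a * partial f i x + b * partial f j x) + L2 / 2 * (a ^+ 2 + b ^+ 2).
Proof.
move=> ij.
set d := a *: evec R i + b *: evec R j.
set c := a * partial f i x + b * partial f j x.
set q := L2 / 2 * (a ^+ 2 + b ^+ 2).
pose psi u := f (x + u *: d) - (u * c + u ^+ 2 * q).
have dpsi (u : R) : is_derive u 1 psi ('D_d f (x + u *: d) - (c + 2 * u * q)).
  exact: is_deriveB (is_derive_along x d u) (poly2_is_derive c q u).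
have cpsi : {within `[(0:R), 1], continuous psi}%classic.
  apply: continuous_subspaceT => u; apply: differentiable_continuous.
  by apply/derivable1_diffP; have [] := dpsi u.
have [u u01 psi10] := MVT_segment ler01 (fun u _ => dpsi u) cpsi.
have u0 : 0 <= u by move: u01; rewrite in_itv /= => /andP[].
have Dx : 'D_d f x = c by rewrite derive_evec2.
have := derive_evec2_increment x i j a b u ij u0; rewrite -/d Dx.
have -> : u * (L2 * (a ^+ 2 + b ^+ 2)) = 2 * u * q by rewrite /q; field.
move: psi10; rewrite /psi !scale0r !addr0 scale1r !mul0r expr0n /= mul0r addr0 subr0.
by rewrite mul1r expr1n mul1r subr0 mulr1; lra.
Qed.

Lemma partial_eq0_of_coord_min {x j} : (1 < n)%N ->
  (forall t, f x <= f (x + t *: evec R j)) -> partial f j x = 0.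
Proof.
move=> n1 xmin; have [k jk] := exists_ord_neq n1 j.
suff : `|partial f j x| <= L2 * `|0 : R| by rewrite normr0 mulr0 normr_le0 => /eqP.
apply: norm_le_of_quadratic_ge0 (L2_bound_ge0 n1) _ => t.
have := descent_evec2 x j k t 0 jk; have := xmin t.
rewrite scale0r addr0 mul0r addr0 expr0n /= addr0 add0r mulrC; lra.
Qed.

Lemma partial_le_of_swap_min {x i j a} : (1 < n)%N -> i != j -> partial f i x = 0 ->
  (forall t, f x <= f (x + (a *: evec R i + t *: evec R j))) ->
  `|partial f j x| <= L2 * `|a|.
Proof.
move=> n1 ij pi0 xmin; apply: norm_le_of_quadratic_ge0 (L2_bound_ge0 n1) _ => t.
have := descent_evec2 x i j a t ij; have := xmin t.
rewrite pi0 mulr0 add0r mulrC; lra.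
Qed.

Lemma L_stationary_of_coord_min {s x} : (1 < n)%N ->
  (forall j t, f x <= f (x + t *: evec R j)) -> L_stationary f s L2 x.
Proof.
move=> n1 xmin i; have gi := partial_eq0_of_coord_min n1 (xmin i).
split=> // _; rewrite gi normr0.
exact: mulr_ge0 (L2_bound_ge0 n1) (Ms_ge0 _ _).
Qed.

(* Off the support, the swap removes a coordinate i of x attaining M_s(x). *)
Lemma L_stationary_of_swap_min {s x} : (1 < n)%N -> (0 < s)%N -> (s <= l0 x)%N ->
  (forall i j t, x 0 i != 0 -> f x <= f (x - x 0 i *: evec R i + t *: evec R j)) ->
  L_stationary f s L2 x.
Proof.
move=> n1 s0 sx xmin.
have gS i : x 0 i != 0 -> partial f i x = 0.
  move=> xi; apply: partial_eq0_of_coord_min n1 _ => t.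
  by have := xmin i i (t + x 0 i) xi; rewrite scalerDl addrCA subrK addrC.
move=> j; split; first exact: gS.
move=> xj; have [i [xi <-]] := Ms_attained s0 sx.
have ij : i != j by apply: contraNneq xi => ->; rewrite xj.
rewrite -[`|x 0 i|]normrN; apply: partial_le_of_swap_min n1 ij (gS i xi) _ => t.
by have := xmin i j t xi; rewrite scaleNr addrA.
Qed.

End Descent.

Section Greedy.
Context {R : realType} {n s : nat} {f : 'rV[R]_n -> R}.
Context {xs : nat -> 'rV[R]_n} {xstar : 'rV[R]_n}.
Hypotheses (fc : forall z, {for z, continuous f}) (steps : forall k, greedy_step f s (xs k) (xs k.+1)).
Hypothesis acc : accumulation_point xs xstar.

Lemma greedy_step_values {x x'} : greedy_step f s x x' ->
  [/\ f x' <= f x,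
      (l0 x < s)%N -> forall j t, f x' <= f (x + t *: evec R j) &
      ~~ (l0 x < s)%N -> forall i j t, x 0 i != 0 ->
          f x' <= f (x - x 0 i *: evec R i + t *: evec R j)].
Proof.
rewrite /greedy_step; case: ifP => hs.
  case=> [[i [t [_ [min_t [/ltW lt_t ->]]]]]|[min_x ->]].
    by split=> // _; exact: min_t.
  by split=> // _; exact: min_x.
case=> [[i [j [t [_ [_ [min_t [/ltW lt_t ->]]]]]]]|[min_x ->]].
  by split=> // _; exact: min_t.
by split=> // _; exact: min_x.
Qed.

Lemma greedy_values_nonincreasing {k m} : (k <= m)%N -> f (xs m) <= f (xs k).
Proof.
move=> /subnK <-; elim: (m - k)%N => [|p IH]; first by rewrite add0n.
by rewrite addSn; apply: le_trans IH; case: (greedy_step_values (steps (p + k))).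
Qed.

Lemma accumulation_value_le k : f xstar <= f (xs k).
Proof.
rewrite leNgt; apply/negP => lt_k.
have near_gt : \forall y \near xstar, f (xs k) < f y by apply: cvgr_gt (fc xstar) _ lt_k.
have [m [km lt_m]] := accumulation_near acc near_gt k.
by move: (greedy_values_nonincreasing km); rewrite leNgt lt_m.
Qed.

Lemma accumulation_le_moves {k} : (l0 (xs k) < s)%N ->
  forall j t, f xstar <= f (xs k + t *: evec R j).
Proof.
move=> lt_k j t; apply: le_trans (accumulation_value_le k.+1) _.
by case: (greedy_step_values (steps k)) => _ /(_ lt_k j t).
Qed.

Lemma accumulation_le_swaps {k} : ~~ (l0 (xs k) < s)%N ->
  forall i j t, xs k 0 i != 0 -> f xstar <= f (xs k - xs k 0 i *: evec R i + t *: evec R j).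
Proof.
move=> ge_k i j t xi; apply: le_trans (accumulation_value_le k.+1) _.
by case: (greedy_step_values (steps k)) => _ _ /(_ ge_k i j t xi).
Qed.

(* Near x^*, an iterate either has fewer than s nonzeros, or it has a nonzero
   coordinate i outside the support of x^*; the swap of i then approximates
   the move from x^*. *)
Lemma coord_min_of_sparse_accumulation : (l0 xstar < s)%N ->
  forall j t, f xstar <= f (xstar + t *: evec R j).
Proof.
move=> lt_s j t; rewrite leNgt; apply/negP => lt_j.
have near_move : \forall y \near xstar, f (y + t *: evec R j) < f xstar.
  have move_cont : {for xstar, continuous (fun y : 'rV[R]_n => y + t *: evec R j)}.
    apply: (@continuousD _ _ _ id (fun _ => t *: evec R j)); last exact: cst_continuous.
    exact: cvg_id.
  exact: cvgr_lt (continuous_comp move_cont (fc _)) _ lt_j.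
have near_swap : \forall y \near xstar, forall i, xstar 0 i = 0 ->
    f ((y : 'rV[R]_n) - y 0 i *: evec R i + t *: evec R j) < f xstar.
  apply: (@filter_forall _ _ (fun i (y : 'rV[R]_n) => xstar 0 i = 0 ->
    f (y - y 0 i *: evec R i + t *: evec R j) < f xstar) (nbhs xstar)) => i.
  have [xi|xi] := eqVneq (xstar 0 i) 0; last by apply: nearW => y /eqP; rewrite (negbTE xi).
  have lt_i : f (xstar - xstar 0 i *: evec R i + t *: evec R j) < f xstar.
    by rewrite xi scale0r subr0.
  have near_i : \forall y \near xstar,
      f ((y : 'rV[R]_n) - y 0 i *: evec R i + t *: evec R j) < f xstar.
    exact: cvgr_lt (continuous_comp (swap_continuous i j t xstar) (fc _)) _ lt_i.
  by move: near_i; apply: filterS => y lt_y _.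
have [k [_ [lt_move lt_swap]]] := accumulation_near acc (filterI near_move near_swap) 0.
have [lt_k|ge_k] := ltnP (l0 (xs k)) s.
  by move: (accumulation_le_moves lt_k j t); rewrite leNgt lt_move.
have [i [xki xi]] := l0_ltP (leq_trans lt_s ge_k).
by move: (accumulation_le_swaps (negbT (leq_gtF ge_k)) i j t xki); rewrite leNgt lt_swap.
Qed.

Lemma swap_min_of_full_accumulation : (s <= l0 xstar)%N ->
  forall i j t, xstar 0 i != 0 ->
  f xstar <= f (xstar - xstar 0 i *: evec R i + t *: evec R j).
Proof.
move=> ge_s i j t xi; rewrite leNgt; apply/negP => lt_swap.
have near_swap : \forall y \near xstar,
    f ((y : 'rV[R]_n) - y 0 i *: evec R i + t *: evec R j) < f xstar.
  exact: cvgr_lt (continuous_comp (swap_continuous i j t xstar) (fc _)) _ lt_swap.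
have [k [_ [lt_k supp_k]]] := accumulation_near acc (filterI near_swap (near_support xstar)) 0.
have ge_k : ~~ (l0 (xs k) < s)%N by rewrite -leqNgt (leq_trans ge_s (l0_le_support supp_k)).
by move: (accumulation_le_swaps ge_k i j t (supp_k i xi)); rewrite leNgt lt_k.
Qed.

End Greedy.

Theorem corollary3p2 (R : realType) (n s : nat) (f : 'rV[R]_n -> R) (L2 : R)
    (xs : nat -> 'rV[R]_n) (xstar : 'rV[R]_n) :
  (forall x, differentiable f x) ->
  (forall i : 'I_n, continuous (partial f i)) ->
  (exists L : R, forall x y, enorm (grad f x - grad f y) <= L * enorm (x - y)) ->
  (exists m : R, forall x, m <= f x) ->
  (0 < s)%N -> (s < n)%N ->
  L2_bound f L2 ->
  greedy_seq f s xs ->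
  accumulation_point xs xstar ->
  L_stationary f s L2 xstar.
Proof.
move=> df _ _ _ s0 sn f_L2 [_ steps] acc.
have fc z : {for z, continuous f} by exact: differentiable_continuous.
have n1 : (1 < n)%N by apply: leq_ltn_trans sn.
have [lt_s|ge_s] := ltnP (l0 xstar) s.
  have xmin := coord_min_of_sparse_accumulation fc steps acc lt_s.
  exact: (L_stationary_of_coord_min df f_L2 n1 xmin).
have xmin := swap_min_of_full_accumulation fc steps acc ge_s.
exact: (L_stationary_of_swap_min df f_L2 n1 s0 ge_s xmin).
Qed.
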